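(* Let $n\ge2$, let $x\in\mathbb{C}^{n\times n}$ be generic (as defined in the context), and let $d=\operatorname{diag}(d(1),\ldots,d(n))$ be an invertible diagonal matrix. Put $\hat x=dxd^{-1}$ (which is generic with the same leading principal eigenvalues as $x$). With the same fixed orderings of the eigenvalues of the leading principal submatrices, let $b_m$ and $\hat b_m$ ($1\le m\le n-1$) be the dual coordinates of $x$ and of $\hat x$ respectively. Then \[ \hat b_m=b_m\,\frac{d(m+1)}{d(m)},\qquad 1\le m\le n-1. \]
   Context: For a square matrix $x$, $x_k$ is its leading principal $k\times k$ submatrix and $E(x_k)$ its eigenvalue multiset. A matrix $x\in\mathbb{C}^{n\times n}$ is generic if for every $1\le k\le n$ the eigenvalues of $x_k$ are distinct and for every $1\le k\le n-1$, $E(x_k)\cap E(x_{k+1})=\varnothing$. Fix, for each $k$, an ordering $\mu^{(k)}_1,\ldots,\mu^{(k)}_k$ of $E(x_k)$ and put $\Lambda_k=\operatorname{diag}(\mu^{(k)}_1,\ldots,\mu^{(k)}_k)$. For generic $x$ and $1\le m\le n-1$, let $g_m\in\mathrm{GL}(m)$ be the unique matrix with $x_m=g_m\Lambda_mg_m^{-1}$ whose last row consists of ones; the dual coordinates $b_m\in\mathbb{C}^m$ of $x$ are defined by $\begin{pmatrix} g_m^{-1}&0\\0&1\end{pmatrix} x_{m+1}\begin{pmatrix} g_m&0\\0&1\end{pmatrix}=\begin{pmatrix}\Lambda_m & c_m\\ b_m^{T} & \delta_{m+1}\end{pmatrix}$ for some $c_m\in\mathbb{C}^m$, $\delta_{m+1}\in\mathbb{C}$.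 *)

From HB Require Import structures.
From mathcomp Require Import all_boot all_order all_algebra.
From mathcomp Require Import complex.
From mathcomp Require Import Rstruct.
Set Implicit Arguments. Unset Strict Implicit. Unset Printing Implicit Defensive.
Import Order.TTheory GRing.Theory Num.Theory.
Local Open Scope ring_scope.

Definition C : Type := (Rdefinitions.R)[i].

(* Entry (i,j) (0-indexed) of x, with 0 outside the range. *)
Definition mxentry (F : nzRingType) (n : nat) (x : 'M[F]_n) (i j : nat) : F :=
  match (insub i : option 'I_n), (insub j : option 'I_n) with
  | Some i', Some j' => x i' j'
  | _, _ => 0
  end.

(* Leading principal k x k submatrix x_k of x (meaningful for k <= n). *)
Definition lpsub (F : nzRingType) (n : nat) (k : nat) (x : 'M[F]_n) : 'M[F]_k :=
  \matrix_(i < k, j < k) mxentry x i j.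

(* s lists the eigenvalue multiset E(A) of A (with multiplicity):
   the characteristic polynomial of A splits as prod_(a <- s) (X - a). *)
Definition eigen_list (F : fieldType) (k : nat) (A : 'M[F]_k) (s : seq F) : Prop :=
  char_poly A = \prod_(a <- s) ('X - a%:P).

Definition generic (F : fieldType) (n : nat) (x : 'M[F]_n) : Prop :=
  (forall k, (1 <= k <= n)%N ->
     forall s, eigen_list (lpsub k x) s -> uniq s) /\
  (forall k, (1 <= k <= n - 1)%N ->
     forall a, ~~ (eigenvalue (lpsub k x) a && eigenvalue (lpsub k.+1 x) a)).

(* Lambda_m = diag(mu_1, ..., mu_m) from the chosen ordering s of E(x_m). *)
Definition Lambda (F : fieldType) (m : nat) (s : seq F) : 'M[F]_m :=
  diag_mx (\row_(i < m) s`_i).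

Definition is_gm (F : fieldType) (n : nat) (x : 'M[F]_n) (s : seq F) (m : nat)
  (g : 'M[F]_m) : Prop :=
  g \in unitmx /\
  lpsub m x = g *m Lambda m s *m invmx g /\
  (forall i j : 'I_m, (i : nat) = m.-1 -> g i j = 1).

(* Dual coordinate b_m (as the row vector b_m^T): the lower-left 1 x m block of
   diag(g^{-1},1) x_{m+1} diag(g,1). *)
Definition dual_b (F : fieldType) (n : nat) (x : 'M[F]_n) (m : nat) (g : 'M[F]_m)
  : 'rV[F]_m :=
  dlsubmx (block_mx (invmx g) 0 0 (1%:M : 'M[F]_1) *m lpsub (m + 1) x
           *m block_mx g 0 0 (1%:M : 'M[F]_1)).

From HB Require Import structures.
From mathcomp Require Import all_boot all_order all_algebra.
From mathcomp Require Import complex.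
From mathcomp Require Import Rstruct.
From mathcomp Require Import ring zify.
Set Implicit Arguments. Unset Strict Implicit. Unset Printing Implicit Defensive.
Import Order.TTheory GRing.Theory Num.Theory.
Local Open Scope ring_scope.

(* Since the eigenvalues of x_m are distinct, a matrix g with x_m = g Lambda_m g^-1
   is unique up to scaling its columns.  As \hat x_m = d_m x_m d_m^-1, the matrix
   d_m g_m also diagonalizes \hat x_m, so \hat g_m = d_m g_m c with c diagonal, and
   the last-row normalization forces c = d(m)^-1.  The last row of
   \hat x_{m+1} \hat g_m then picks up the factor d(m+1)/d(m). *)

Section DiagonalScaling.

Variable F : fieldType.

Definition diag_fun (n : nat) (f : nat -> F) : 'M[F]_n := diag_mx (\row_(i < n) f i).

(* No range condition on i, j: out of range both sides are the junk value 0. *)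
Lemma mxentry_diag_fun_conj (n : nat) (f f' : nat -> F) (x : 'M[F]_n) (i j : nat) :
  mxentry (diag_fun n f *m x *m diag_fun n f') i j = f i * mxentry x i j * f' j.
Proof.
rewrite /mxentry; case: insubP => [i' _ <-|_] /=; last by rewrite mulr0 mul0r.
case: insubP => [j' _ <-|_] /=; last by rewrite mulr0 mul0r.
by rewrite mul_mx_diag mul_diag_mx !mxE.
Qed.

Lemma lpsub_diag_fun_conj (n k : nat) (f f' : nat -> F) (x : 'M[F]_n) :
  lpsub k (diag_fun n f *m x *m diag_fun n f') =
  diag_fun k f *m lpsub k x *m diag_fun k f'.
Proof.
apply/matrixP => i j.
by rewrite [LHS]mxE mxentry_diag_fun_conj mul_mx_diag mul_diag_mx !mxE.
Qed.

Lemma diag_fun_mulV (n : nat) (f : nat -> F) :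
  (forall i, (i < n)%N -> f i != 0) ->
  diag_fun n f *m diag_fun n (fun i => (f i)^-1) = 1%:M.
Proof.
move=> f_neq0; rewrite mulmx_diag -diag_const_mx; congr diag_mx.
by apply/rowP => i; rewrite !mxE mulfV ?f_neq0.
Qed.

Lemma invmx_diag_fun (n : nat) (f : nat -> F) :
  (forall i, (i < n)%N -> f i != 0) ->
  invmx (diag_fun n f) = diag_fun n (fun i => (f i)^-1).
Proof.
move=> /diag_fun_mulV DV1; have [Du _] := mulmx1_unit DV1.
by rewrite -[RHS](mulKmx Du) DV1 mulmx1.
Qed.

End DiagonalScaling.

Section Eigenbasis.

Variables (F : fieldType) (m : nat) (s : seq F).
Hypotheses (size_s : size s = m) (uniq_s : uniq s).

Lemma comm_Lambda_is_diag (P : 'M[F]_m) :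
  P *m Lambda m s = Lambda m s *m P -> is_diag_mx P.
Proof.
move=> PL; apply/is_diag_mxP => i j ij_neq.
have := congr1 (fun M : 'M[F]_m => M i j) PL.
rewrite /Lambda mul_mx_diag mul_diag_mx !mxE => PLij.
have s_neq : s`_j != s`_i by rewrite nth_uniq ?size_s ?ltn_ord // eq_sym.
have : P i j * (s`_j - s`_i) = 0 by rewrite mulrBr PLij mulrC subrr.
by move/eqP; rewrite mulf_eq0 subr_eq0 (negbTE s_neq) orbF => /eqP.
Qed.

Lemma eigenbasis_diag_scale (A g g' : 'M[F]_m) :
  g \in unitmx -> A *m g = g *m Lambda m s -> A *m g' = g' *m Lambda m s ->
  exists c : 'rV[F]_m, g' = g *m diag_mx c.
Proof.
move=> gu Ag Ag'; pose P := invmx g *m g'.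
have AE : A = g *m Lambda m s *m invmx g by rewrite -Ag mulmxK.
have PL : P *m Lambda m s = Lambda m s *m P.
  by rewrite /P -mulmxA -Ag' AE -!mulmxA mulKmx.
have /diag_mxP[c Pc] := comm_Lambda_is_diag PL.
by exists c; rewrite -Pc /P mulKVmx.
Qed.

End Eigenbasis.

Lemma size_eigen_list (F : fieldType) (k : nat) (A : 'M[F]_k) (s : seq F) :
  eigen_list A s -> size s = k.
Proof.
by move=> As; have := size_char_poly A; rewrite As size_prod_XsubC => -[].
Qed.

Lemma dual_bE (F : fieldType) (n : nat) (x : 'M[F]_n) (m : nat) (g : 'M[F]_m) :
  dual_b x g = \row_(j < m) \sum_(k < m) mxentry x m k * g k j.
Proof.
rewrite /dual_b -[lpsub (m + 1) x]submxK !mulmx_block !mul0mx !mulmx0 !mul1mx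
  !addr0 !add0r block_mxKdl.
by apply/rowP => j; rewrite !mxE; apply: eq_bigr => k _; rewrite !mxE /= addn0.
Qed.

Lemma dual_b_diag_fun_conj (F : fieldType) (n m : nat) (f : nat -> F)
    (x : 'M[F]_n) (g : 'M[F]_m) (c : F) :
  (forall k, (k < m)%N -> f k != 0) ->
  dual_b (diag_fun n f *m x *m diag_fun n (fun i => (f i)^-1))
         (diag_fun m f *m g *m c%:M) = (f m * c) *: dual_b x g.
Proof.
move=> f_neq0; rewrite !dual_bE; apply/rowP => j.
rewrite !mxE big_distrr; apply: eq_bigr => k _ /=.
rewrite mxentry_diag_fun_conj mul_mx_scalar mul_diag_mx !mxE.
by field; rewrite f_neq0.
Qed.

Theorem mainTheorem4 (n : nat) (x : 'M[C]_n) (mu : nat -> seq C) (d : nat -> C) :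
  (2 <= n)%N ->
  generic x ->
  (forall k, (1 <= k <= n)%N -> eigen_list (lpsub k x) (mu k)) ->
  (forall j, (1 <= j <= n)%N -> d j != 0) ->
  let D : 'M[C]_n := diag_mx (\row_(i < n) d i.+1) in
  let xh : 'M[C]_n := D *m x *m invmx D in
  forall m : nat, (1 <= m <= n - 1)%N ->
  forall g gh : 'M[C]_m,
    is_gm x (mu m) g -> is_gm xh (mu m) gh ->
    dual_b xh gh = (d m.+1 / d m) *: dual_b x g.
Proof.
move=> _ [gen_uniq _] eig d_neq0 D xh m m_bd g gh [gu [xg g1]] [ghu [xhgh gh1]].
pose f i := d i.+1; pose finv i := (f i)^-1; pose Dm := diag_fun m f.
have f_neq0 k : (k < n)%N -> f k != 0 by move=> ?; apply: d_neq0; lia.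
have fm_neq0 k : (k < m)%N -> f k != 0 by move=> ?; apply: f_neq0; lia.
have xhE : xh = diag_fun n f *m x *m diag_fun n finv by rewrite -(invmx_diag_fun f_neq0).
have eig_m : eigen_list (lpsub m x) (mu m) by apply: eig; lia.
have Lg : lpsub m x *m g = g *m Lambda m (mu m) by rewrite xg mulmxKV.
have DmV : invmx Dm = diag_fun m finv by rewrite invmx_diag_fun.
have Dmu : Dm \in unitmx := (mulmx1_unit (diag_fun_mulV fm_neq0)).1.
have Lhg : lpsub m xh *m (Dm *m g) = Dm *m g *m Lambda m (mu m).
  rewrite xhE lpsub_diag_fun_conj -DmV -!mulmxA (mulmxA (invmx Dm)).
  by rewrite mulVmx // mul1mx Lg.
have Lhgh : lpsub m xh *m gh = gh *m Lambda m (mu m) by rewrite xhgh mulmxKV.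
have Dgu : Dm *m g \in unitmx by rewrite unitmx_mul Dmu gu.
have uniq_mu : uniq (mu m) by apply: (gen_uniq m) eig_m; lia.
have [c ghE] := eigenbasis_diag_scale (size_eigen_list eig_m) uniq_mu Dgu Lhg Lhgh.
have last_m : (m.-1 < m)%N by lia.
have cE : diag_mx c = (d m)^-1%:M.
  rewrite -diag_const_mx; congr diag_mx; apply/rowP => j.
  have := gh1 (Ordinal last_m) j erefl.
  rewrite ghE mul_mx_diag mul_diag_mx !mxE g1 // mulr1 /f prednK; last lia.
  have dm_neq0 : d m != 0 by apply: d_neq0; lia.
  by move=> dc; apply: (mulfI dm_neq0); rewrite dc mulfV.
by rewrite ghE cE xhE; apply: dual_b_diag_fun_conj.
Qed.
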